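(* Let $d\in\mathbb{N}$ and let $P,Q\in\mathbb{C}[x]$. The following are equivalent: (i) there exist $\vec\theta=(\theta_0,\dots,\theta_d)\in\mathbb{R}^{d+1}$, $\vec\phi=(\phi_0,\dots,\phi_d)\in\mathbb{R}^{d+1}$ and $\lambda\in\mathbb{R}$ such that, for every unitary $U$ (on any finite-dimensional Hilbert space), $$\Big(\prod_{j=1}^{d} R(\theta_j,\phi_j,0)\,A\Big)R(\theta_0,\phi_0,\lambda)=\begin{bmatrix}P(U)&\cdot\\ Q(U)&\cdot\end{bmatrix};$$ (ii) $\deg P\le d$, $\deg Q\le d$, and $|P(x)|^2+|Q(x)|^2=1$ for all $x\in\mathbb{T}$. Moreover, for every choice of $\vec\theta,\vec\phi\in\mathbb{R}^{d+1}$, $\lambda\in\mathbb{R}$, the left-hand side of (i) has the block form $\begin{bmatrix}P(U)&\cdot\\ Q(U)&\cdot\end{bmatrix}$ for some polynomials $P,Q$ satisfying (ii).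
   Context: $\mathbb{T}=\{x\in\mathbb{C}:|x|=1\}$. For a unitary $U$ on a Hilbert space $\mathcal{H}$, operators on $\mathbb{C}^2\otimes\mathcal{H}$ are written as $2\times 2$ block matrices with respect to the first (ancilla qubit) factor; a dot denotes an unspecified block. The signal operator is $A=|0\rangle\langle 0|\otimes U+|1\rangle\langle 1|\otimes I=\begin{bmatrix}U&0\\0&I\end{bmatrix}$, and the signal processing operator is $R(\theta,\phi,\lambda)=\begin{bmatrix}e^{i(\lambda+\phi)}\cos\theta & e^{i\phi}\sin\theta\\ e^{i\lambda}\sin\theta & -\cos\theta\end{bmatrix}\otimes I$. The product is ordered so that the operator equals $R(\theta_d,\phi_d,0)A\,R(\theta_{d-1},\phi_{d-1},0)A\cdots R(\theta_1,\phi_1,0)A\,R(\theta_0,\phi_0,\lambda)$. *)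

From HB Require Import structures.
From mathcomp Require Import all_boot all_order all_algebra.
From mathcomp Require Import complex.
From mathcomp Require Import reals trigo.
Set Implicit Arguments. Unset Strict Implicit. Unset Printing Implicit Defensive.
Import Order.TTheory GRing.Theory Num.Theory.
Local Open Scope ring_scope.
Local Open Scope complex_scope.

Section QSP.
Variable R : realType.
Local Notation C := R[i].

Definition expi (t : R) : C := (cos t) +i* (sin t).

Definition rc (x : R) : C := x%:C.

Definition adjmx n (U : 'M[C]_n) : 'M[C]_n := (map_mx Num.conj U)^T.
Definition unitary_mx n (U : 'M[C]_n) : Prop :=
  U *m adjmx U = 1%:M /\ adjmx U *m U = 1%:M.

(* signal operator A = |0><0| (x) U + |1><1| (x) I *)
Definition sig_op n (U : 'M[C]_n.+1) : 'M[C]_(n.+1 + n.+1) :=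
  block_mx U 0 0 1%:M.

(* signal processing operator R(theta, phi, lambda) (x) I *)
Definition sp_op n (th ph lam : R) : 'M[C]_(n.+1 + n.+1) :=
  block_mx ((expi (lam + ph) * rc (cos th))%:M) ((expi ph * rc (sin th))%:M)
           ((expi lam * rc (sin th))%:M)        ((- rc (cos th))%:M).

(* W_0 = R(th_0, ph_0, lam);  W_{k+1} = R(th_{k+1}, ph_{k+1}, 0) A W_k.
   The operator of the statement is W_d. *)
Fixpoint qsp_prod n (U : 'M[C]_n.+1) (th ph : nat -> R) (lam : R) (k : nat)
  : 'M[C]_(n.+1 + n.+1) :=
  match k with
  | 0 => sp_op n (th 0) (ph 0) lam
  | k'.+1 => sp_op n (th k) (ph k) 0 *m sig_op U *m qsp_prod U th ph lam k'
  end.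

Definition qsp_op d n (U : 'M[C]_n.+1) (th ph : 'I_d.+1 -> R) (lam : R) :=
  qsp_prod U (fun k => th (inord k)) (fun k => ph (inord k)) lam d.

Definition has_block_form n (M : 'M[C]_(n.+1 + n.+1)) (U : 'M[C]_n.+1)
  (P Q : {poly C}) : Prop :=
  ulsubmx M = horner_mx U P /\ dlsubmx M = horner_mx U Q.

Definition qsp_achievable (d : nat) (P Q : {poly C}) : Prop :=
  (size P <= d.+1)%N /\ (size Q <= d.+1)%N /\
  forall x : C, `|x| = 1 -> `|P.[x]| ^+ 2 + `|Q.[x]| ^+ 2 = 1.

End QSP.

From HB Require Import structures.
From mathcomp Require Import all_boot all_order all_algebra.
From mathcomp Require Import complex.
From mathcomp Require Import reals trigo.
From mathcomp Require Import ring lra.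
Set Implicit Arguments. Unset Strict Implicit. Unset Printing Implicit Defensive.
Import Order.TTheory GRing.Theory Num.Theory.
Local Open Scope complex_scope.
Local Open Scope ring_scope.

(* Multiplying by R(θ, φ, 0) A acts on the first block column of the product as the
   degree-one matrix polynomial [layer] in U, which is unitary whenever U is a unit scalar;
   hence the column is (P(U), Q(U)) with deg P, deg Q <= d and |P|^2 + |Q|^2 = 1 on the unit
   circle.  Conversely, if P, Q have degree at most D > 0 and satisfy the circle condition,
   then P P^# + Q Q^# = X^D for the conjugate reversals P^#, Q^#, so the top coefficient
   vector (P_D, Q_D) is orthogonal to the constant one (P_0, Q_0).  This lets one choose a
   layer whose inverse sends (P, Q) to a pair of degree at most D - 1, and induction ends
   at constants.  Polynomials are compared through the 1 x 1 unitaries x with |x| = 1. *)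

Lemma size_polyC_mul (S : nzRingType) (a : S) (p : {poly S}) :
  (size (a%:P * p)%R <= size p)%N.
Proof. by rewrite mul_polyC size_scale_leq. Qed.

Lemma size_X_mul (S : nzRingType) (p : {poly S}) : (size ('X * p)%R <= (size p).+1)%N.
Proof. by rewrite (leq_trans (size_polyMleq _ _)) // size_polyX. Qed.

Lemma coefM_top (S : nzRingType) (D : nat) (p q : {poly S}) :
  (size p <= D.+1)%N -> (size q <= D.+1)%N -> (p * q)`_(D + D) = p`_D * q`_D.
Proof.
move=> sp sq; have lt_D_2D : (D < (D + D).+1)%N by rewrite ltnS leq_addr.
rewrite coefM (bigD1 (Ordinal lt_D_2D)) //= addnK big1 ?addr0 // => j neq_jD.
have [lt_jD | lt_Dj | eq_jD] := ltngtP j D.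
- by rewrite [q`__](leq_sizeP _ _ sq) ?mulr0 // ltn_subRL ltn_add2r.
- by rewrite [p`__](leq_sizeP _ _ sp) ?mul0r.
- by move: neq_jD; rewrite -val_eqE /= eq_jD eqxx.
Qed.

Lemma horner_mx_scalar (S : comNzRingType) (n : nat) (x : S) (p : {poly S}) :
  horner_mx (x%:M : 'M_n.+1) p = (p.[x])%:M.
Proof.
elim/poly_ind: p => [|p c IHp]; first by rewrite rmorph0 horner0 raddf0.
rewrite rmorphD rmorphM /= horner_mx_X horner_mx_C IHp hornerMXaddC.
by rewrite raddfD /= scalar_mxM mulmxE.
Qed.

Lemma lsubmx_mul (S : pzRingType) (m p q1 q2 : nat)
    (M : 'M[S]_(m, p)) (N : 'M[S]_(p, q1 + q2)) :
  lsubmx (M *m N) = M *m lsubmx N.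
Proof. by rewrite -{1}(hsubmxK N) mul_mx_row row_mxKl. Qed.

Section UnitCircle.
Variable R : rcfType.
Local Notation C := R[i].

Lemma conj_norm1 (x : C) : `|x| = 1 -> x^* = x^-1.
Proof. by move=> x1; rewrite invC_norm x1 expr1n invr1 mul1r. Qed.

Lemma mul_conj_norm1 (x : C) : `|x| = 1 -> x * x^* = 1.
Proof. by move=> x1; rewrite -normCK x1 expr1n. Qed.

Lemma polarC (z : C) : exists (r : R) (u : C), [/\ `|u| = 1, `|z| = r%:C & z = r%:C * u].
Proof.
have [r zr] : exists r : R, `|z| = r%:C.
  by exists (Num.sqrt (complex.Re z ^+ 2 + complex.Im z ^+ 2)); exact: normc_def.
have [->|z0] := eqVneq z 0.
  by exists 0, 1; rewrite normr1 normr0 mul0r.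
exists r, (z / `|z|); split => //.
  by rewrite normf_div normr_id divff // normr_eq0.
by rewrite -zr mulrC -mulrA mulVf ?mulr1 // normr_eq0.
Qed.

Lemma unit_circle_poly_eq (p q : {poly C}) :
  (forall x : C, `|x| = 1 -> p.[x] = q.[x]) -> p = q.
Proof.
move=> eq_pq; apply/eqP; rewrite -subr_eq0; apply/eqP.
pose a k : R := k.+1%:R^-1.
have a01 k : 0 < a k <= 1 by rewrite invr_gt0 ltr0n /= invf_le1 ?ltr0n // ler1n.
pose z k : C := a k +i* Num.sqrt (1 - a k ^+ 2).
apply: (@roots_geq_poly_eq0 _ _ (map z (iota 0 (size (p - q))))).
- apply/allP => _ /mapP [k _ ->]; rewrite rootE hornerD hornerN eq_pq ?subrr //.
  have /andP [a_gt0 a_le1] := a01 k.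
  rewrite normc_def /= sqr_sqrtr; last by rewrite subr_ge0; nra.
  by rewrite addrC subrK sqrtr1.
- rewrite map_inj_uniq ?iota_uniq // => i j /(congr1 (@complex.Re R)) /invr_inj /eqP.
  by rewrite eqr_nat eqSS => /eqP.
- by rewrite size_map size_iota.
Qed.

Definition unit_on_circle (P Q : {poly C}) : Prop :=
  forall x : C, `|x| = 1 -> `|P.[x]| ^+ 2 + `|Q.[x]| ^+ 2 = 1.

Definition conj_rev (D : nat) (P : {poly C}) : {poly C} :=
  \poly_(i < D.+1) (P`_(D - i))^*.

Lemma horner_conj_rev D (P : {poly C}) (x : C) :
  (size P <= D.+1)%N -> `|x| = 1 -> (conj_rev D P).[x] = x ^+ D * (P.[x])^*.
Proof.
move=> sP x1; rewrite horner_poly (horner_coef_wide x sP) rmorph_sum mulr_sumr /=.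
rewrite (reindex_inj rev_ord_inj) /=; apply: eq_bigr => i _.
have le_iD : (i <= D)%N by rewrite -ltnS.
rewrite subSS subKn // rmorphM rmorphXn /= (conj_norm1 x1).
rewrite -[in x ^+ D](subnK le_iD) exprD exprVn.
field; by rewrite expf_neq0 // -normr_eq0 x1 oner_neq0.
Qed.

Lemma unit_on_circle_coef_orth D (P Q : {poly C}) : (0 < D)%N ->
  (size P <= D.+1)%N -> (size Q <= D.+1)%N -> unit_on_circle P Q ->
  P`_D * (P`_0)^* + Q`_D * (Q`_0)^* = 0.
Proof.
move=> D_gt0 sP sQ PQ1.
have XD : P * conj_rev D P + Q * conj_rev D Q = 'X^D.
  apply: unit_circle_poly_eq => x x1.
  rewrite hornerD !hornerM !horner_conj_rev // hornerXn mulrCA [Q.[x] * _]mulrCA.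
  by rewrite -mulrDr -!normCK PQ1 // mulr1.
have := congr1 (fun p : {poly C} => p`_(D + D)) XD.
rewrite /= coefD !coefM_top ?size_poly // coefXn.
rewrite /conj_rev !coef_poly ltnSn subnn => ->.
by rewrite -[X in (_ == X)%N]add0n eqn_add2r eqn0Ngt D_gt0.
Qed.

Lemma conj_realC (r : R) : (r%:C)^* = r%:C.
Proof. by apply: conj_Creal; rewrite complex_real. Qed.

Lemma exists_annihilating_row (a b : C) : exists (e : C) (c s : R),
  [/\ `|e| = 1, c ^+ 2 + s ^+ 2 = 1 & e^* * c%:C * a + s%:C * b = 0].
Proof.
have [ra [u [u1 _ ->]]] := polarC a; have [rb [v [v1 _ ->]]] := polarC b.
have [r0 | r_neq0] := eqVneq (ra ^+ 2 + rb ^+ 2) 0.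
  have [-> ->] : ra = 0 /\ rb = 0 by split; nra.
  by exists 1, 1, 0; rewrite normr1 expr1n expr0n addr0 !mul0r mulr0 addr0.
pose N : R := Num.sqrt (ra ^+ 2 + rb ^+ 2).
have N2 : N ^+ 2 = ra ^+ 2 + rb ^+ 2 by rewrite sqr_sqrtr // addr_ge0 ?sqr_ge0.
have N_neq0 : N != 0 by apply: contraNneq r_neq0 => N0; rewrite -N2 N0 expr0n.
have u_neq0 : u != 0 by rewrite -normr_eq0 u1 oner_neq0.
exists (- (u * v^*)), (rb / N), (ra / N); split.
- by rewrite normrN normrM norm_conjC u1 v1 mulr1.
- by rewrite !expr_div_n -mulrDl addrC -N2 divff // sqrf_eq0.
- rewrite rmorphN rmorphM /= (conjCK v) (conj_norm1 u1) !fmorph_div /=.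
  by field; rewrite fmorph_eq0 N_neq0 u_neq0.
Qed.

(* Multiplying the goal by p0^* and by q0^* gives combinations of the two hypotheses. *)
Lemma annihilate_orthogonal (e : C) (c s : R) (p0 q0 pD qD : C) :
  `|e| = 1 -> (p0 != 0) || (q0 != 0) -> pD * p0^* + qD * q0^* = 0 ->
  e^* * c%:C * p0 + s%:C * q0 = 0 -> e^* * s%:C * pD - c%:C * qD = 0.
Proof.
move=> e1 v0_neq0 orth row0.
have row0' : e * c%:C * p0^* + s%:C * q0^* = 0.
  by have := congr1 Num.conj row0; rewrite rmorph0 rmorphD !rmorphM /= conjCK !conj_realC.
have ee : e^* * e = 1 by rewrite mulrC mul_conj_norm1.
set t := e^* * s%:C * pD - c%:C * qD.
have t_p0 : p0^* * t = 0.
  transitivity (e^* * s%:C * (pD * p0^* + qD * q0^*)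
    - e^* * qD * (e * c%:C * p0^* + s%:C * q0^*) + c%:C * qD * p0^* * (e^* * e - 1)).
    by rewrite /t; ring.
  by rewrite orth row0' ee subrr !mulr0 subrr addr0.
have t_q0 : q0^* * t = 0.
  transitivity (e^* * pD * (e * c%:C * p0^* + s%:C * q0^*)
    - c%:C * pD * p0^* * (e^* * e - 1) - c%:C * (pD * p0^* + qD * q0^*)).
    by rewrite /t; ring.
  by rewrite orth row0' ee subrr !mulr0 !subrr.
apply/eqP; apply: contraTT v0_neq0 => t_neq0.
move/eqP: t_p0; move/eqP: t_q0; rewrite !mulf_eq0 !conjC_eq0 (negbTE t_neq0) !orbF.
by move=> /eqP-> /eqP->; rewrite eqxx.
Qed.

Lemma exists_annihilating_rows (p0 q0 pD qD : C) : pD * p0^* + qD * q0^* = 0 ->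
  exists (e : C) (c s : R), [/\ `|e| = 1, c ^+ 2 + s ^+ 2 = 1,
    e^* * c%:C * p0 + s%:C * q0 = 0 & e^* * s%:C * pD - c%:C * qD = 0].
Proof.
move=> orth; have [v0_neq0 | ] := boolP ((p0 != 0) || (q0 != 0)).
  have [e [c [s [e1 cs1 row0]]]] := exists_annihilating_row p0 q0.
  by exists e, c, s; split => //; exact: annihilate_orthogonal e1 v0_neq0 orth row0.
rewrite negb_or !negbK => /andP [/eqP-> /eqP->].
have [e [c [s [e1 cs1 rowD]]]] := exists_annihilating_row pD (- qD).
exists e, s, c; split => //; first by rewrite addrC.
  by rewrite !mulr0 addr0.
by rewrite -mulrN.
Qed.

(* One factor R(θ, φ, 0) A acting on the first block column, with e = e^{iφ}, c = cos θ,
   s = sin θ, and 'X standing for U. *)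
Definition layer (e : C) (c s : R) (PQ : {poly C} * {poly C}) : {poly C} * {poly C} :=
  ((e * c%:C)%:P * 'X * PQ.1 + (e * s%:C)%:P * PQ.2,
   (s%:C)%:P * 'X * PQ.1 - (c%:C)%:P * PQ.2).

Lemma size_layer k e c s (PQ : {poly C} * {poly C}) :
  (size PQ.1 <= k)%N -> (size PQ.2 <= k)%N ->
  (size (layer e c s PQ).1 <= k.+1)%N /\ (size (layer e c s PQ).2 <= k.+1)%N.
Proof.
move=> s1 s2; have sX (a : C) : (size (a%:P * 'X * PQ.1)%R <= k.+1)%N.
  by rewrite -mulrA (leq_trans (size_polyC_mul _ _)) // (leq_trans (size_X_mul _)).
have sC (a : C) : (size (a%:P * PQ.2)%R <= k.+1)%N.
  by rewrite (leq_trans (size_polyC_mul _ _)) // (leq_trans s2).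
by split; rewrite (leq_trans (size_polyD _ _)) // geq_max sX ?size_polyN sC.
Qed.

Lemma norm_horner_layer e c s (PQ : {poly C} * {poly C}) x :
  `|e| = 1 -> c ^+ 2 + s ^+ 2 = 1 -> `|x| = 1 ->
  `|(layer e c s PQ).1.[x]| ^+ 2 + `|(layer e c s PQ).2.[x]| ^+ 2 =
  `|PQ.1.[x]| ^+ 2 + `|PQ.2.[x]| ^+ 2.
Proof.
move=> e1 cs1 x1.
have cs1C : c%:C ^+ 2 + s%:C ^+ 2 = 1 by rewrite -!rmorphXn -rmorphD cs1.
have e_neq0 : e != 0 by rewrite -normr_eq0 e1 oner_neq0.
have x_neq0 : x != 0 by rewrite -normr_eq0 x1 oner_neq0.
rewrite !hornerE !normCK !(rmorphD, rmorphM, rmorphN) /= !conj_realC.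
rewrite (conj_norm1 e1) (conj_norm1 x1) -[RHS]mul1r -cs1C.
by field; rewrite e_neq0 x_neq0.
Qed.

Lemma unit_on_circle_layer e c s (PQ : {poly C} * {poly C}) :
  `|e| = 1 -> c ^+ 2 + s ^+ 2 = 1 ->
  unit_on_circle (layer e c s PQ).1 (layer e c s PQ).2 <-> unit_on_circle PQ.1 PQ.2.
Proof.
by move=> e1 cs1; split=> PQ1 x x1; rewrite -(PQ1 x x1) norm_horner_layer.
Qed.

Lemma layer_inverse e c s (P Q P' Q' : {poly C}) :
  `|e| = 1 -> c ^+ 2 + s ^+ 2 = 1 ->
  'X * P' = (e^* * c%:C)%:P * P + (s%:C)%:P * Q ->
  Q' = (e^* * s%:C)%:P * P - (c%:C)%:P * Q ->
  layer e c s (P', Q') = (P, Q).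
Proof.
move=> e1 cs1 XP' ->.
have ee : e%:P * (e^*)%:P = 1 :> {poly C} by rewrite -polyCM mul_conj_norm1.
have cs : (c%:C)%:P ^+ 2 + (s%:C)%:P ^+ 2 = 1 :> {poly C}.
  by rewrite -!rmorphXn -!rmorphD /= cs1.
rewrite /layer /= -!mulrA XP' !polyCM; congr pair.
  transitivity (e%:P * (e^*)%:P * ((c%:C)%:P ^+ 2 + (s%:C)%:P ^+ 2) * P); first by ring.
  by rewrite ee cs !mul1r.
transitivity (((c%:C)%:P ^+ 2 + (s%:C)%:P ^+ 2) * Q); first by ring.
by rewrite cs mul1r.
Qed.

Lemma peel_layer k (P Q : {poly C}) :
  (size P <= k.+2)%N -> (size Q <= k.+2)%N -> unit_on_circle P Q ->
  exists (e : C) (c s : R) (PQ' : {poly C} * {poly C}),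
    [/\ `|e| = 1, c ^+ 2 + s ^+ 2 = 1, (size PQ'.1 <= k.+1)%N, (size PQ'.2 <= k.+1)%N
      & layer e c s PQ' = (P, Q)].
Proof.
move=> sP sQ PQ1.
have [e [c [s [e1 cs1 T0 Btop]]]] :=
  exists_annihilating_rows (unit_on_circle_coef_orth (ltn0Sn k) sP sQ PQ1).
(* (T, B) is (P, Q) under the inverse of the constant part of the layer; by the choice of
   e, c, s, T is divisible by 'X and B loses its top coefficient. *)
pose T := (e^* * c%:C)%:P * P + (s%:C)%:P * Q.
pose B := (e^* * s%:C)%:P * P - (c%:C)%:P * Q.
have sT : (size T <= k.+2)%N.
  by rewrite (leq_trans (size_polyD _ _)) // geq_max !(leq_trans (size_polyC_mul _ _)).
have sB : (size B <= k.+1)%N.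
  apply/leq_sizeP => j; rewrite leq_eqVlt => /predU1P [<- | lt_k1_j].
    by rewrite /B coefB !coefCM.
  rewrite /B coefB !coefCM [P`_j](leq_sizeP _ _ sP) ?[Q`_j](leq_sizeP _ _ sQ) //.
  by rewrite !mulr0 subrr.
have XT : 'X * drop_poly 1 T = T.
  rewrite -[RHS](poly_take_drop 1) expr1 mulrC.
  suff -> : take_poly 1 T = 0 by rewrite add0r.
  by apply/polyP => -[|i]; rewrite coef_take_poly coef0 // /T coefD !coefCM.
exists e, c, s, (drop_poly 1 T, B); split => //.
  by rewrite size_drop_poly leq_subLR.
exact: layer_inverse.
Qed.

End UnitCircle.

Section QSPPolynomials.
Variable R : realType.
Local Notation C := R[i].

Lemma norm_expi (t : R) : `|expi t| = 1.
Proof. by rewrite normc_def /= cos2Dsin2 sqrtr1. Qed.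

Lemma expi0 : expi 0 = 1 :> C.
Proof. by rewrite /expi cos0 sin0. Qed.

Lemma expiD (a b : R) : expi (a + b) = expi a * expi b.
Proof. by rewrite /expi cosD sinD /=; congr Complex; ring. Qed.

Lemma cos_sin_onto (c s : R) : c ^+ 2 + s ^+ 2 = 1 -> exists t, cos t = c /\ sin t = s.
Proof.
move=> cs1; have c_itv : -1 <= c <= 1 by apply/andP; split; nra.
have cos_acos : cos (acos c) = c by rewrite acosK // in_itv.
have sin_acos_c : sin (acos c) = `|s|.
  by rewrite sin_acos // -sqrtr_sqr; congr Num.sqrt; lra.
have [s_ge0 | s_lt0] := lerP 0 s.
  by exists (acos c); rewrite cos_acos sin_acos_c ger0_norm.
by exists (- acos c); rewrite cosN sinN cos_acos sin_acos_c ltr0_norm ?opprK.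
Qed.

Lemma expi_onto (z : C) : `|z| = 1 -> exists t, expi t = z.
Proof.
case: z => a b; rewrite normc_def /= => /complexI ab1.
have : a ^+ 2 + b ^+ 2 = 1 by rewrite -[LHS]sqr_sqrtr ?ab1 ?expr1n // addr_ge0 ?sqr_ge0.
by move=> /cos_sin_onto [t [ct st]]; exists t; rewrite /expi ct st.
Qed.

Fixpoint qsp_polys (th ph : nat -> R) (lam : R) (k : nat) : {poly C} * {poly C} :=
  if k is k'.+1 then layer (expi (ph k)) (cos (th k)) (sin (th k)) (qsp_polys th ph lam k')
  else ((expi (lam + ph 0%N) * rc (cos (th 0%N)))%:P, (expi lam * rc (sin (th 0%N)))%:P).

Lemma qsp_polys_ext (th ph th' ph' : nat -> R) lam k :
  (forall i, (i <= k)%N -> th i = th' i /\ ph i = ph' i) ->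
  qsp_polys th ph lam k = qsp_polys th' ph' lam k.
Proof.
elim: k => [|k IHk] eq_k /=; first by have [-> ->] := eq_k 0%N (leqnn 0).
have [-> ->] := eq_k k.+1 (leqnn _).
by rewrite IHk // => i le_ik; apply: eq_k; apply: leqW.
Qed.

Lemma lsubmx_qsp_prod n (U : 'M[C]_n.+1) th ph lam k :
  lsubmx (qsp_prod U th ph lam k) =
  col_mx (horner_mx U (qsp_polys th ph lam k).1) (horner_mx U (qsp_polys th ph lam k).2).
Proof.
elim: k => [|k IHk] /=; first by rewrite /sp_op block_mxEh row_mxKl !horner_mx_C.
rewrite lsubmx_mul IHk /sp_op /sig_op -mulmxA !mul_block_col.
rewrite !(mul0mx, mulmx0, addr0, add0r, mul1mx, mulmx1).
rewrite !rmorphD !rmorphN !rmorphM /= !horner_mx_X !horner_mx_C -!mulmxE.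
by rewrite expi0 mul1mx mulNmx !mulmxA.
Qed.

Lemma qsp_prod_block_form n (U : 'M[C]_n.+1) th ph lam k :
  has_block_form (qsp_prod U th ph lam k) U
    (qsp_polys th ph lam k).1 (qsp_polys th ph lam k).2.
Proof.
have ulsubmx_lsub (M : 'M[C]_(n.+1 + n.+1)) : ulsubmx M = usubmx (lsubmx M).
  by apply/matrixP => i j; rewrite !mxE.
have dlsubmx_lsub (M : 'M[C]_(n.+1 + n.+1)) : dlsubmx M = dsubmx (lsubmx M).
  by apply/matrixP => i j; rewrite !mxE.
by rewrite /has_block_form ulsubmx_lsub dlsubmx_lsub lsubmx_qsp_prod col_mxKu col_mxKd.
Qed.

Lemma size_qsp_polys th ph lam k :
  (size (qsp_polys th ph lam k).1 <= k.+1)%N /\ (size (qsp_polys th ph lam k).2 <= k.+1)%N.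
Proof. by elim: k => [|k [s1 s2]] /=; [rewrite !size_polyC_leq1 | exact: size_layer]. Qed.

Lemma unit_on_circle_qsp_polys th ph lam k :
  unit_on_circle (qsp_polys th ph lam k).1 (qsp_polys th ph lam k).2.
Proof.
elim: k => [|k IHk] /=; last by apply/unit_on_circle_layer; rewrite ?norm_expi ?cos2Dsin2.
move=> x _; rewrite !hornerC !normrM !norm_expi !mul1r !normCK /rc !conj_realC.
by rewrite -!rmorphM -rmorphD /= -!expr2 cos2Dsin2.
Qed.

Lemma qsp_achievable_polys d th ph lam :
  qsp_achievable d (qsp_polys th ph lam d).1 (qsp_polys th ph lam d).2.
Proof.
have [s1 s2] := size_qsp_polys th ph lam d.
by split=> //; split=> //; exact: unit_on_circle_qsp_polys.
Qed.

Lemma qsp_polys_onto d (P Q : {poly C}) : qsp_achievable d P Q ->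
  exists th ph lam, qsp_polys th ph lam d = (P, Q).
Proof.
elim: d P Q => [|d IHd] P Q [sP [sQ PQ1]].
  have [ra [u [u1 nPa Pa]]] := polarC P`_0; have [rb [v [v1 nQb Qb]]] := polarC Q`_0.
  have /cos_sin_onto [t [ct st]] : ra ^+ 2 + rb ^+ 2 = 1.
    apply: complexI; have := PQ1 1 (normr1 _).
    by rewrite [P]size1_polyC // [Q]size1_polyC // !hornerC nPa nQb rmorphD !rmorphXn.
  have [l el] := expi_onto v1.
  have [f ef] : exists f, expi f = u * v^*.
    by apply: expi_onto; rewrite normrM norm_conjC u1 v1 mulr1.
  exists (fun=> t), (fun=> f), l => /=.
  rewrite expiD el ef ct st /rc [P]size1_polyC // [Q]size1_polyC // Pa Qb.
  have -> : v * (u * v^*) = u by rewrite mulrCA mul_conj_norm1 ?mulr1.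
  by rewrite mulrC (mulrC v).
have [e [c [s [[P' Q'] [e1 cs1 sP' sQ' layerE]]]]] := peel_layer sP sQ PQ1.
have PQ'1 : unit_on_circle P' Q'.
  by apply/(unit_on_circle_layer (P', Q') e1 cs1); rewrite layerE.
have [th [ph [lam qspE]]] := IHd P' Q' (conj sP' (conj sQ' PQ'1)).
have [p ep] := expi_onto e1; have [t [ct st]] := cos_sin_onto cs1.
exists (fun i => if i == d.+1 then t else th i), (fun i => if i == d.+1 then p else ph i), lam.
rewrite /= eqxx ep ct st -layerE -qspE; congr layer; apply: qsp_polys_ext => i le_id.
by rewrite ltn_eqF.
Qed.

Lemma unitary_scalar n (x : C) : `|x| = 1 -> unitary_mx (x%:M : 'M[C]_n.+1).
Proof.
move=> x1; rewrite /unitary_mx /adjmx map_scalar_mx tr_scalar_mx -!scalar_mxM.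
by rewrite mul_conj_norm1 // mulrC mul_conj_norm1.
Qed.

Lemma qsp_block_form_polys d (th ph : 'I_d.+1 -> R) lam (P Q : {poly C}) :
  (forall n (U : 'M[C]_n.+1), unitary_mx U -> has_block_form (qsp_op U th ph lam) U P Q) ->
  P = (qsp_polys (fun k => th (inord k)) (fun k => ph (inord k)) lam d).1 /\
  Q = (qsp_polys (fun k => th (inord k)) (fun k => ph (inord k)) lam d).2.
Proof.
move=> PQ_form; set PQ' := qsp_polys _ _ _ _.
have horner_eq x : `|x| = 1 -> P.[x] = PQ'.1.[x] /\ Q.[x] = PQ'.2.[x].
  move=> x1; have [] := PQ_form 0%N _ (unitary_scalar 0 x1).
  have [-> ->] := qsp_prod_block_form (x%:M : 'M[C]_1)
    (fun k => th (inord k)) (fun k => ph (inord k)) lam d.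
  rewrite !horner_mx_scalar => /matrixP/(_ 0 0) + /matrixP/(_ 0 0).
  by rewrite !mxE /= !mulr1n => -> ->.
by split; apply: unit_circle_poly_eq => x /horner_eq [].
Qed.

End QSPPolynomials.

Theorem theorem3 (R : realType) (d : nat) :
  (forall P Q : {poly R[i]},
     (exists (th ph : 'I_d.+1 -> R) (lam : R),
        forall (n : nat) (U : 'M[R[i]]_n.+1), unitary_mx U ->
          has_block_form (qsp_op U th ph lam) U P Q)
     <-> qsp_achievable d P Q)
  /\
  (forall (th ph : 'I_d.+1 -> R) (lam : R),
     exists P Q : {poly R[i]},
       qsp_achievable d P Q /\
       forall (n : nat) (U : 'M[R[i]]_n.+1), unitary_mx U ->
         has_block_form (qsp_op U th ph lam) U P Q).
Proof.
split=> [P Q | th ph lam]; last first.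
  exists (qsp_polys (fun k => th (inord k)) (fun k => ph (inord k)) lam d).1.
  exists (qsp_polys (fun k => th (inord k)) (fun k => ph (inord k)) lam d).2.
  by split=> [|n U _]; [exact: qsp_achievable_polys | exact: qsp_prod_block_form].
split=> [[th [ph [lam PQ_form]]] | achPQ].
  by have [-> ->] := qsp_block_form_polys PQ_form; exact: qsp_achievable_polys.
have [th [ph [lam qspE]]] := qsp_polys_onto achPQ.
exists (fun i : 'I_d.+1 => th i), (fun i : 'I_d.+1 => ph i), lam => n U _.
have := qsp_prod_block_form U (fun k => th (@inord d k)) (fun k => ph (@inord d k)) lam d.
by rewrite (qsp_polys_ext _ _ (th' := th) (ph' := ph)) ?qspE // => i le_id; rewrite inordK.
Qed.
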